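(* Let $m\ge 2$, $\boldsymbol{\mu}\in\mathbb{R}^m$, let $\boldsymbol{\Lambda}\in\mathbb{R}^{m\times m}$ be invertible, $\boldsymbol{\Sigma}=\boldsymbol{\Lambda}\boldsymbol{\Lambda}^T$, and let $\boldsymbol{\Sigma}^{-1/2}$ denote the symmetric positive definite inverse square root of $\boldsymbol{\Sigma}$. Let $\mathcal{R}$ be a scalar random variable with $\mathcal{R}>0$ almost surely, and let $\boldsymbol{\mathcal{V}}\sim vMF(\boldsymbol{\mu}_v,\tau)$ be independent of $\mathcal{R}$. Let $\boldsymbol{\mathcal{X}}=\boldsymbol{\mu}+\mathcal{R}\boldsymbol{\Lambda}\boldsymbol{\mathcal{V}}$ and $T=(\boldsymbol{\mathcal{X}}-\boldsymbol{\mu})^T\boldsymbol{\Sigma}^{-1}(\boldsymbol{\mathcal{X}}-\boldsymbol{\mu})$. Then $T$ is independent of the whitened random vector $\boldsymbol{\Sigma}^{-1/2}(\boldsymbol{\mathcal{X}}-\boldsymbol{\mu})/\sqrt{T}$.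
   Context: The von Mises–Fisher distribution $vMF(\boldsymbol{\mu}_v,\tau)$ on the unit sphere $\mathbb{S}^{m-1}=\{\mathbf{x}\in\mathbb{R}^m:\mathbf{x}^T\mathbf{x}=1\}$, with mean direction $\boldsymbol{\mu}_v\in\mathbb{S}^{m-1}$ and concentration $\tau>0$, has density with respect to the surface measure on $\mathbb{S}^{m-1}$ proportional to $\exp(\tau\boldsymbol{\mu}_v^T\mathbf{v})$. *)

From HB Require Import structures.
From mathcomp Require Import all_boot all_order all_algebra.
From mathcomp Require Import all_classical all_reals all_analysis.

Set Implicit Arguments.
Unset Strict Implicit.
Unset Printing Implicit Defensive.

Import Order.TTheory GRing.Theory Num.Theory.
Local Open Scope classical_set_scope.
Local Open Scope ring_scope.

(* Points of R^m are represented as m.-tuple R (which carries the library's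
   product sigma-algebra); tcol / ctup convert to/from column vectors. *)
Definition tcol (R : realType) (m : nat) (t : m.-tuple R) : 'cV[R]_m :=
  \col_i tnth t i.

Definition ctup (R : realType) (m : nat) (c : 'cV[R]_m) : m.-tuple R :=
  [tuple c i 0 | i < m].

(* Lebesgue measure on R^n = n.-tuple R, defined by iterated integration
   (Tonelli) of the indicator of the set, from the library Lebesgue
   measure on R. *)
Fixpoint lebesgue_tuple (R : realType) (n : nat) : set (n.-tuple R) -> \bar R :=
  match n with
  | 0%N => fun A => (\1_A [tuple] : R)%:E
  | n'.+1 => fun A =>
      (\int[@lebesgue_measure R]_x
         @lebesgue_tuple R n' [set t : n'.-tuple R | A [tuple of x :: t]])%E
  end.

Definition sphere (R : realType) (m : nat) : set (m.-tuple R) :=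
  [set v | \sum_(i < m) tnth v i ^+ 2 = 1].

(* surface (Hausdorff) measure on S^{m-1}, via the cone-measure formula
   sigma(A) = m * Leb_m { t v : 0 < t <= 1, v in A } for A subset S^{m-1}. *)
Definition cone_set (R : realType) (m : nat) (A : set (m.-tuple R)) :
  set (m.-tuple R) :=
  [set x | exists (t : R) (v : m.-tuple R),
      [/\ 0 < t <= 1, (A `&` @sphere R m) v & x = ctup (t *: tcol v)]].

Definition sphere_measure (R : realType) (m : nat) (A : set (m.-tuple R)) : \bar R :=
  (m%:R%:E * @lebesgue_tuple R m (cone_set A))%E.

Definition has_vMF_law d (Omega : measurableType d) (R : realType) (m : nat)
  (P : probability Omega R) (V : Omega -> m.-tuple R) (mu_v : 'cV[R]_m) (tau : R) :=
  exists c : R, 0 < c /\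
    forall B : set (m.-tuple R), measurable B ->
      P (V @^-1` B) =
      (c%:E * \int[@sphere_measure R m]_(v in B `&` @sphere R m)
                 (expR (tau * (mu_v^T *m tcol v) 0 0))%:E)%E.

Definition independent d (Omega : measurableType d) (R : realType)
  (P : probability Omega R) d1 d2 (T1 : measurableType d1) (T2 : measurableType d2)
  (X : Omega -> T1) (Y : Omega -> T2) :=
  forall (A : set T1) (B : set T2), measurable A -> measurable B ->
    P (X @^-1` A `&` Y @^-1` B) = (P (X @^-1` A) * P (Y @^-1` B))%E.

From HB Require Import structures.
From mathcomp Require Import all_boot all_order all_algebra.
From mathcomp Require Import all_classical all_reals all_analysis.

(* Since X - mu = R Lambda V, the Mahalanobis form T equals R^2 |V|^2 and,
   when R > 0, the whitened vector is Sinvhalf Lambda V / |V|.  Almost surely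
   R > 0 and |V| = 1, so T = R^2 and W = Sinvhalf Lambda V almost surely: T is
   a.s. a function of R alone and W a function of V alone, and independence of
   R and V passes to measurable functions of them and to a.s. modifications. *)

Import Order.TTheory GRing.Theory Num.Theory.
Local Open Scope classical_set_scope.
Local Open Scope ring_scope.

Section measure_ae.
Context {d} {T : measurableType d} {R : realType} (mu : {measure set T -> \bar R}).

Lemma le_measure_ae {A B : set T} : measurable A -> measurable B ->
  {ae mu, forall x, A x -> B x} -> (mu A <= mu B)%E.
Proof.
move=> mA mB [N [mN N0 AB_N]].
rewrite -(measureU0 mB mN N0); apply: le_measure; rewrite ?inE //.
  exact: measurableU.
move=> x Ax; have [Nx|nNx] := pselect (N x); [by right | left].
by apply: contrapT => nBx; apply: nNx; apply: AB_N => /(_ Ax).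
Qed.

Lemma eq_measure_ae {A B : set T} : measurable A -> measurable B ->
  {ae mu, forall x, A x <-> B x} -> mu A = mu B.
Proof.
move=> mA mB AB; apply/le_anti/andP; split; apply: le_measure_ae => //.
- by apply: filterS AB => x [].
- by apply: filterS AB => x [].
Qed.

End measure_ae.

Lemma measurableT_preimage {d1 d2} {T1 : measurableType d1} {T2 : measurableType d2}
    {f : T1 -> T2} {A : set T2} :
  measurable_fun setT f -> measurable A -> measurable (f @^-1` A).
Proof. by move=> mf mA; rewrite -[_ @^-1` _]setTI; exact: mf. Qed.

Section independent.
Context {d} {Omega : measurableType d} {R : realType} {P : probability Omega R}.
Context {d1 d2} {T1 : measurableType d1} {T2 : measurableType d2}.

Lemma independent_comp {d1' d2'} {U1 : measurableType d1'} {U2 : measurableType d2'}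
    {X : Omega -> T1} {Y : Omega -> T2} {f : T1 -> U1} {g : T2 -> U2} :
  measurable_fun setT f -> measurable_fun setT g ->
  independent P X Y -> independent P (f \o X) (g \o Y).
Proof.
move=> mf mg XY A B mA mB.
exact: XY _ _ (measurableT_preimage mf mA) (measurableT_preimage mg mB).
Qed.

Lemma independent_ae_eq {X X' : Omega -> T1} {Y Y' : Omega -> T2} :
  measurable_fun setT X -> measurable_fun setT Y ->
  measurable_fun setT X' -> measurable_fun setT Y' ->
  {ae P, forall w, X w = X' w} -> {ae P, forall w, Y w = Y' w} ->
  independent P X Y -> independent P X' Y'.
Proof.
move=> mX mY mX' mY' XX' YY' XY A B mA mB.
have [mXA mX'A] := (measurableT_preimage mX mA, measurableT_preimage mX' mA).
have [mYB mY'B] := (measurableT_preimage mY mB, measurableT_preimage mY' mB).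
rewrite -(eq_measure_ae P mXA mX'A); last first.
  by apply: filterS XX' => w XXw; rewrite /preimage /= XXw.
rewrite -(eq_measure_ae P mYB mY'B); last first.
  by apply: filterS YY' => w YYw; rewrite /preimage /= YYw.
rewrite -XY // (eq_measure_ae P (measurableI _ _ mXA mYB) (measurableI _ _ mX'A mY'B)) //.
by apply: filterS2 XX' YY' => w XXw YYw; rewrite /preimage /= XXw YYw.
Qed.

End independent.

Section tuple_vectors.
Context {R : realType} {m : nat}.
Implicit Types (t v : m.-tuple R) (M : 'M[R]_m).

Definition sqnorm v : R := \sum_(i < m) tnth v i ^+ 2.

Lemma tcol_sqnorm v : ((tcol v)^T *m tcol v) 0 0 = sqnorm v.
Proof. by rewrite mxE; apply: eq_bigr => i _; rewrite !mxE expr2. Qed.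

Lemma mahalanobis_mulmx (L : 'M[R]_m) (x : 'cV[R]_m) : L \in unitmx ->
  (L *m x)^T *m invmx (L *m L^T) *m (L *m x) = x^T *m x.
Proof.
move=> uL; have uLLt : L *m L^T \in unitmx by rewrite unitmx_mul uL unitmx_tr uL.
have cancel_Sigma : L^T *m invmx (L *m L^T) *m L = 1%:M.
  transitivity (invmx L *m ((L *m L^T) *m invmx (L *m L^T)) *m L).
    by rewrite !mulmxA mulVmx // mul1mx.
  by rewrite mulmxV // mulmx1 mulVmx.
rewrite trmx_mul -!mulmxA (mulmxA L^T) (mulmxA (L^T *m _)) cancel_Sigma.
by rewrite mul1mx.
Qed.

Lemma mahalanobis_radial (L : 'M[R]_m) (r : R) v : L \in unitmx ->
  ((r *: (L *m tcol v))^T *m invmx (L *m L^T) *m (r *: (L *m tcol v))) 0 0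
  = r ^+ 2 * sqnorm v.
Proof.
move=> uL; have -> : (r *: (L *m tcol v))^T = r *: (L *m tcol v)^T.
  by apply/matrixP => i j; rewrite !mxE.
rewrite -!scalemxAl -!scalemxAr scalerA mahalanobis_mulmx //.
by rewrite mxE tcol_sqnorm expr2.
Qed.

Lemma whiten_radial (S L : 'M[R]_m) (r : R) v : 0 < r -> sqnorm v = 1 ->
  (Num.sqrt (r ^+ 2 * sqnorm v))^-1 *: (S *m (r *: (L *m tcol v)))
  = (S *m L) *m tcol v.
Proof.
move=> r0 v1; rewrite v1 mulr1 sqrtr_sqr gtr0_norm // -scalemxAr scalerA.
by rewrite mulVf ?gt_eqF // scale1r mulmxA.
Qed.

Lemma measurable_sqnorm : measurable_fun setT sqnorm.
Proof.
apply: measurable_sum => i; apply: measurable_realfun.measurable_funX.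
exact: measurable_tnth.
Qed.

Lemma measurable_sphere : measurable (@sphere R m).
Proof.
rewrite -[@sphere R m]setTI; exact: measurable_sqnorm measurableT _ (measurable_set1 _).
Qed.

Lemma measurable_scale_mulmx d (Omega : measurableType d) (a : Omega -> R)
    M (t : Omega -> m.-tuple R) :
  measurable_fun setT a -> measurable_fun setT t ->
  measurable_fun setT (fun w => ctup (a w *: (M *m tcol (t w)))).
Proof.
move=> ma mt; apply/measurable_fun_tnthP => i.
have -> : @tnth m R ^~ i \o (fun w => ctup (a w *: (M *m tcol (t w))))
    = (fun w => a w * \sum_j M i j * tnth (t w) j).
  by apply: funext => w; rewrite /= tnth_mktuple !mxE; congr (_ * _);
    apply: eq_bigr => j _; rewrite mxE.
apply: measurable_realfun.measurable_funM => //.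
apply: measurable_sum => j; apply: measurable_realfun.measurable_funM => //.
exact: measurableT_comp (measurable_tnth j) mt.
Qed.

Lemma measurable_mulmx_tuple M : measurable_fun setT (fun v => ctup (M *m tcol v)).
Proof.
have -> : (fun v => ctup (M *m tcol v)) = (fun v => ctup (1 *: (M *m tcol v))).
  by apply: funext => v; rewrite scale1r.
exact: measurable_scale_mulmx.
Qed.

End tuple_vectors.

Lemma vMF_ae_sphere {d} {Omega : measurableType d} {R : realType} {m : nat}
    {P : probability Omega R} {V : Omega -> m.-tuple R} {mu_v tau} :
  measurable_fun setT V -> has_vMF_law P V mu_v tau ->
  {ae P, forall w, @sphere R m (V w)}.
Proof.
move=> mV [c [_ lawV]].
have mSC : measurable (~` @sphere R m) by exact: measurableC measurable_sphere.
exists (V @^-1` ~` @sphere R m); split => //; first exact: measurableT_preimage.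
rewrite lawV //.
have := lawV set0 measurable0; rewrite preimage_set0 measure0 set0I => ->.
by rewrite setICl.
Qed.

Theorem proposition2 (R : realType) (m : nat) (d : measure_display)
  (Omega : measurableType d) (P : probability Omega R)
  (mu : 'cV[R]_m) (Lambda : 'M[R]_m) (Sinvhalf : 'M[R]_m)
  (mu_v : 'cV[R]_m) (tau : R)
  (Rv : Omega -> R) (V : Omega -> m.-tuple R) :
  (2 <= m)%N ->
  Lambda \in unitmx ->
  (* Sinvhalf is the symmetric positive definite inverse square root of
     Sigma = Lambda Lambda^T *)
  Sinvhalf^T = Sinvhalf ->
  (forall x : 'cV[R]_m, x != 0 -> 0 < (x^T *m Sinvhalf *m x) 0 0) ->
  Sinvhalf *m Sinvhalf = invmx (Lambda *m Lambda^T) ->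
  measurable_fun setT Rv ->
  measurable_fun setT V ->
  {ae P, forall w, 0 < Rv w} ->
  \sum_(i < m) tnth (ctup mu_v) i ^+ 2 = 1 ->
  0 < tau ->
  has_vMF_law P V mu_v tau ->
  independent P Rv V ->
  let X := fun w => mu + Rv w *: (Lambda *m tcol (V w)) in
  let T := fun w => ((X w - mu)^T *m invmx (Lambda *m Lambda^T) *m (X w - mu)) 0 0 in
  let W := fun w => ctup ((Num.sqrt (T w))^-1 *: (Sinvhalf *m (X w - mu))) in
  independent P T W.
Proof.
move=> _ uL _ _ _ mRv mV Rv_gt0 _ _ lawV RvV X T W.
have XE w : X w - mu = Rv w *: (Lambda *m tcol (V w)) by rewrite addrAC subrr add0r.
have TE w : T w = Rv w ^+ 2 * sqnorm (V w) by rewrite /T XE mahalanobis_radial.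
have mT : measurable_fun setT T.
  rewrite (funext TE); apply: measurable_realfun.measurable_funM.
    exact: measurable_realfun.measurable_funX.
  exact: measurableT_comp (@measurable_sqnorm R m) mV.
have mW : measurable_fun setT W.
  have -> : W = fun w => ctup ((T w `^ (- 2^-1) * Rv w) *: ((Sinvhalf *m Lambda) *m tcol (V w))).
    apply: funext => w; rewrite /W XE powRN powR12_sqrt; last first.
      by rewrite TE mulr_ge0 ?sqr_ge0 ?sumr_ge0 // => i _; rewrite sqr_ge0.
    by rewrite -scalemxAr scalerA mulmxA.
  apply: measurable_scale_mulmx => //; apply: measurable_realfun.measurable_funM => //.
  exact: measurableT_comp (measurable_realfun.measurable_powR _) mT.
have radial := filterS2 _ _ Rv_gt0 (vMF_ae_sphere mV lawV).
apply: (independent_ae_eq (X := (fun r => r ^+ 2) \o Rv)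
  (Y := (fun v => ctup ((Sinvhalf *m Lambda) *m tcol v)) \o V)) => //.
- exact: measurable_realfun.measurable_funX.
- exact: measurableT_comp (measurable_mulmx_tuple _) mV.
- by apply: radial => w r0 V1; rewrite /= TE (V1 : sqnorm (V w) = 1) mulr1.
- by apply: radial => w r0 V1; rewrite /W /T XE mahalanobis_radial // whiten_radial.
- exact: independent_comp (measurable_realfun.exprn_measurable _)
    (measurable_mulmx_tuple _) RvV.
Qed.
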